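(* Let $(G,t)$ be a non-trivial problem instance, $X$ a modulator of $G$, $C$ a connected component of $G-X$, $T$ the block-cut tree of $C$, and let $\langle a_1,B_1,a_2,B_2,a_3,B_3,a_4\rangle$ be a simple path in $T$ (with $a_i$ articulation vertices and $B_i$ blocks) such that $N_G\big((V(B_1)\cup V(B_2)\cup V(B_3))\setminus\{a_1,a_4\}\big)=\{a_1,a_4\}$. Let $G'$ be obtained from $G$ by contracting $B_1$ into $a_1$ (replacing $V(B_1)$ by the single vertex $a_1$ adjacent to all of $N_G(V(B_1))$). Then $(G,t)$ has a solution if and only if $(G',t)$ has a solution.
   Context: $\mathrm{tw}$ is treewidth. A solution for $(G,t)$ is $S\subseteq V(G)$ with $|S|\le t$ and $\mathrm{tw}(G-S)\le 2$. A modulator of $G$ is $X$ with $\mathrm{tw}(G-X)\le 2$. $(G,t)$ is trivial if $|V(G)|\le 4$, or $\mathrm{tw}(G)\le 2$, or $t=0$, or some connected subgraph $H$ satisfies $\mathrm{tw}\big(G[N_G[H]]\cup\binom{N_G(H)}{2}\big)\le 2$ ($N_G(H)$: vertices outside $H$ adjacent to $H$; $N_G[H]=V(H)\cup N_G(H)$; $\cup\binom{N_G(H)}{2}$ adds all edges among $N_G(H)$); otherwise non-trivial. For $U\subseteq V(G)$, $N_G(U)$ is the set of vertices outside $U$ adjacent to $U$. A block of a connected graph is a maximal biconnected subgraph (biconnected = connected without articulation vertex); the block-cut tree of a connected graph $C$ is the bipartite tree whose nodes are the articulation vertices of $C$ and the blocks of $C$, with articulation vertex $a$ adjacent to block $B$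 iff $a\in V(B)$. *)

(* Graphs: a finite ground type T, a vertex set V : {set T}
   and an adjacency relation e : rel T (only edges inside the vertex set count). *)
From mathcomp Require Import all_boot.
Set Implicit Arguments. Unset Strict Implicit. Unset Printing Implicit Defensive.

Section Graphs.
Variable T : finType.

Definition restr (e : rel T) (W : {set T}) : rel T :=
  [rel x y | [&& e x y, x \in W & y \in W]].

(* G[W] is connected (the empty vertex set counts as connected here;
   nonemptiness is required separately where needed) *)
Definition connected_in (e : rel T) (W : {set T}) : Prop :=
  forall x y, x \in W -> y \in W -> connect (restr e W) x y.

Definition nbh (V : {set T}) (e : rel T) (U : {set T}) : {set T} :=
  [set y in V :\: U | [exists x in U, e x y]].

Definition cutv (e : rel T) (W : {set T}) (v : T) : Prop :=
  v \in W /\ exists x y, [/\ x \in W :\ v, y \in W :\ v &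
                            ~~ connect (restr e (W :\ v)) x y].

Definition biconnected (e : rel T) (W : {set T}) : Prop :=
  W != set0 /\ connected_in e W /\ forall v, ~ cutv e W v.

Definition block (e : rel T) (C B : {set T}) : Prop :=
  [/\ B \subset C, biconnected e B &
      forall B' : {set T}, B \subset B' -> B' \subset C -> biconnected e B' -> B' = B].

Definition component (V : {set T}) (e : rel T) (X C : {set T}) : Prop :=
  [/\ C != set0, C \subset V :\: X, connected_in e C & nbh (V :\: X) e C = set0].

End Graphs.

(* Trees: symmetric irreflexive relation on a nonempty finite type, connected,
   with exactly #|I| - 1 (undirected) edges. *)
Definition is_tree (I : finType) (r : rel I) : Prop :=
  [/\ symmetric r, irreflexive r, 0 < #|I|,
      (forall i j, connect r i j) &
      #|[set p : I * I | r p.1 p.2]| = 2 * (#|I| - 1)].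

Definition tw_le (T : finType) (k : nat) (W : {set T}) (e : rel T) : Prop :=
  exists (I : finType) (r : rel I) (bag : I -> {set T}),
    [/\ is_tree r,
        (forall i, bag i \subset W) /\
        (forall i, #|bag i| <= k.+1),
        (forall v, v \in W -> exists i, v \in bag i),
        (forall u v, u \in W -> v \in W -> e u v -> exists i, (u \in bag i) && (v \in bag i)) &
        forall v, v \in W ->
          forall i j, v \in bag i -> v \in bag j ->
            connect [rel x y | [&& r x y, v \in bag x & v \in bag y]] i j].

Section Instances.
Variable T : finType.

Definition solution (V : {set T}) (e : rel T) (t : nat) (S : {set T}) : Prop :=
  [/\ S \subset V, #|S| <= t & tw_le 2 (V :\: S) e].

Definition has_solution (V : {set T}) (e : rel T) (t : nat) : Prop :=
  exists S, solution V e t S.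

Definition modulator (V : {set T}) (e : rel T) (X : {set T}) : Prop :=
  X \subset V /\ tw_le 2 (V :\: X) e.

Definition torso_rel (V : {set T}) (e : rel T) (H : {set T}) : rel T :=
  [rel x y | e x y || [&& x \in nbh V e H, y \in nbh V e H & x != y]].

Definition trivial_instance (V : {set T}) (e : rel T) (t : nat) : Prop :=
  #|V| <= 4 \/ tw_le 2 V e \/ t = 0 \/
  exists H : {set T}, [/\ H \subset V, H != set0, connected_in e H &
     tw_le 2 (H :|: nbh V e H) (torso_rel V e H)].

Definition contract_V (V B : {set T}) (a : T) : {set T} := V :\: (B :\ a).

Definition contract_e (V : {set T}) (e : rel T) (B : {set T}) (a : T) : rel T :=
  [rel x y | (x != y) &&
     (if x == a then y \in nbh V e B
      else if y == a then x \in nbh V e B else e x y)].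
End Instances.

(* Contracting B1 cannot hurt: if a solution S of (G,t) avoids B1, then G' - S is
   a minor of G - S; otherwise (S \ B1) + a1 solves (G',t).
   Conversely let S' solve (G',t), put D = B1 u B2 u B3 and let I = D - {a1, a4}
   be its interior, so that N(I) = {a1, a4}. Every edge of G - I survives in G',
   and G[D] has treewidth at most 2 as a subgraph of G - X. If S' meets I,
   replace S' n I by a1. Once a set S contains a1 or a4, G - S is D - S glued to
   G - I - S along a single vertex. Otherwise S' avoids D. If a1
   and a4 are separated in G - I - S', gluing along a1 and then a4 rebuilds
   G - S'. If they are connected, contracting the component of a1 in
   G - I - S' - a4 onto a2 shows that the torso of H = (B2 u B3) - {a2, a4}, whose
   neighbourhood is {a2, a4}, is a minor of G' - S', so (G,t) would be trivial. *)

From mathcomp Require Import all_boot zify.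

Set Implicit Arguments. Unset Strict Implicit. Unset Printing Implicit Defensive.

Lemma nbhP (T : finType) (V U : {set T}) (e : rel T) y :
  reflect (exists2 x, x \in U & [/\ e x y, y \in V & y \notin U]) (y \in nbh V e U).
Proof.
rewrite /nbh inE; apply: (iffP andP).
  by case; rewrite inE => /andP[yU yV] /existsP[x /andP[xU exy]]; exists x.
by move=> [x xU [exy yV yU]]; split; [rewrite inE yU yV | apply/existsP; exists x; rewrite xU].
Qed.

Lemma connect_homo (A B : finType) (ra : rel A) (rb : rel B) (g : A -> B) x y :
  (forall a b, ra a b -> rb (g a) (g b)) -> connect ra x y -> connect rb (g x) (g y).
Proof.
move=> h /connectP [p pp ->]; elim: p x pp => [|z p IH] x /=; first by rewrite connect0.
by case/andP=> rxz pz; apply: connect_trans (connect1 (h _ _ rxz)) (IH _ pz).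
Qed.

Section Connectivity.
Variables (T : finType) (e : rel T).

Lemma connect_restrS (A B : {set T}) x y :
  A \subset B -> connect (restr e A) x y -> connect (restr e B) x y.
Proof.
move=> sAB; apply: connect_sub => u v /and3P[euv uA vA].
by apply: connect1; rewrite /restr /= euv (subsetP sAB _ uA) (subsetP sAB _ vA).
Qed.

Lemma connect_restr_mem (W : {set T}) a x : a \in W -> connect (restr e W) a x -> x \in W.
Proof.
move=> aW /connectP [p pp ->]; elim: p a aW pp => [|z p IH] a aW //=.
by case/andP=> /and3P[_ _ zW]; apply: IH.
Qed.

Lemma exists_first_edge (W : {set T}) a b : irreflexive e -> a != b ->
  connect (restr e W) a b -> exists z, [/\ z \in W, z != a & e a z].
Proof.
move=> eirr ab /connectP [[|z p] pp bl]; first by rewrite bl eqxx in ab.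
case/andP: pp => /and3P[eaz _ zW] _; exists z; split=> //.
by apply: contraTneq eaz => ->; rewrite eirr.
Qed.

Lemma exists_last_edge (A : {set T}) a b : a \in A -> a != b ->
  connect (restr e A) a b -> exists u, connect (restr e (A :\ b)) a u /\ e u b.
Proof.
move=> aA ab /connectP [p pp bl].
suff walk x : x \in A :\ b -> connect (restr e (A :\ b)) a x ->
    path (restr e A) x p -> b = last x p -> exists u, connect (restr e (A :\ b)) a u /\ e u b.
  by apply: walk pp bl; rewrite ?connect0 // !inE ab.
elim: p x {pp bl} => [|z p IH] x xAb ax /=; first by move=> _ bx; rewrite bx !inE eqxx in xAb.
case/andP=> /and3P[exz _ zA] pp bl.
have [zb|zb] := eqVneq z b; first by exists x; split; last rewrite -zb.
have zAb : z \in A :\ b by rewrite !inE zb zA.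
apply: (IH z zAb _ pp bl); apply: connect_trans ax (connect1 _).
by rewrite /restr /= exz zAb xAb.
Qed.

Hypothesis esym : symmetric e.

Lemma restr_sym (W : {set T}) : symmetric (restr e W).
Proof. by move=> x y; rewrite /restr /= esym [(x \in W) && _]andbC. Qed.

Lemma connected_in_component (W : {set T}) a :
  connected_in e [set x | connect (restr e W) a x].
Proof.
set R := [set x | connect (restr e W) a x].
have aR x : x \in R -> connect (restr e R) a x.
  rewrite inE => /connectP [p pp ->]; apply/connectP; exists p => //.
  have pR : all [in R] (a :: p).
    by apply/allP => y /(path_connect pp) ay; rewrite /= inE.
  apply: (sub_in_path _ pR pp) => u v uR vR /and3P[euv _ _].
  by rewrite /restr /= euv uR vR.
move=> x y xR yR; apply: connect_trans (aR y yR).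
by rewrite (sym_connect_sym (restr_sym R)) aR.
Qed.

Lemma nbh_connected_in (V U W : {set T}) u w : irreflexive e -> connected_in e W ->
  u \in W -> w \in W -> u != w -> W :\ u \subset U -> u \in V -> u \notin U ->
  u \in nbh V e U.
Proof.
move=> eirr cW uW wW uw sWU uV uU.
have [z [zW zu euz]] := exists_first_edge eirr uw (cW u w uW wW).
apply/nbhP; exists z; first by rewrite (subsetP sWU) // !inE zu.
by rewrite esym.
Qed.

Definition touch (A B : {set T}) :=
  exists x y, [/\ x \in A, y \in B & (x == y) || e x y].

Lemma touchS (A B A' B' : {set T}) :
  A \subset A' -> B \subset B' -> touch A B -> touch A' B'.
Proof.
by move=> sA sB [x [y [xA yB l]]]; exists x, y; rewrite (subsetP sA _ xA) (subsetP sB _ yB).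
Qed.

Lemma touch_sym (A B : {set T}) : touch A B -> touch B A.
Proof. by move=> [x [y [xA yB l]]]; exists y, x; rewrite eq_sym esym. Qed.

Lemma touchD1 (A B : {set T}) v x y : x \in A -> y \in B -> x != v -> y != v ->
  (x == y) || e x y -> touch (A :\ v) (B :\ v).
Proof. by move=> xA yB xv yv l; exists x, y; rewrite !inE xv yv xA yB. Qed.

Lemma connected_inU (A B : {set T}) :
  connected_in e A -> connected_in e B -> touch A B -> connected_in e (A :|: B).
Proof.
move=> cA cB [x [y [xA yB lxy]]].
have sA : A \subset A :|: B by apply: subsetUl.
have sB : B \subset A :|: B by apply: subsetUr.
have xy : connect (restr e (A :|: B)) x y.
  case/orP: lxy => [/eqP->|exy]; first exact: connect0.
  by apply: connect1; rewrite /restr /= exy (subsetP sA _ xA) (subsetP sB _ yB).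
have csym := sym_connect_sym (restr_sym (A :|: B)).
have AB u v : u \in A -> v \in B -> connect (restr e (A :|: B)) u v.
  move=> uA vB; apply: connect_trans (connect_restrS sA (cA _ _ uA xA)) _.
  exact: connect_trans xy (connect_restrS sB (cB _ _ yB vB)).
move=> u v /setUP[uA|uB] /setUP[vA|vB].
- exact: connect_restrS sA (cA _ _ uA vA).
- exact: AB.
- by rewrite csym AB.
- exact: connect_restrS sB (cB _ _ uB vB).
Qed.

Lemma connected_inU3 (A B C : {set T}) :
  connected_in e A -> connected_in e B -> connected_in e C ->
  [\/ touch A B /\ touch B C, touch A B /\ touch A C | touch A C /\ touch B C] ->
  connected_in e (A :|: B :|: C).
Proof.
have chain A' B' C' : connected_in e A' -> connected_in e B' -> connected_in e C' ->
    touch A' B' -> touch B' C' -> connected_in e (A' :|: B' :|: C').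
  move=> cA cB cC tAB tBC; apply: connected_inU => //; first exact: connected_inU.
  exact: touchS (subsetUr _ _) (subxx _) tBC.
move=> cA cB cC [[tAB tBC]|[tAB tAC]|[tAC tBC]]; first exact: chain.
- by rewrite [A :|: B]setUC; apply: chain => //; apply: touch_sym.
- by rewrite setUAC; apply: chain => //; apply: touch_sym.
Qed.

Lemma connected_inD1 (W : {set T}) v : biconnected e W -> connected_in e (W :\ v).
Proof.
case=> _ [cW ncut] x y; have [vW|vW] := boolP (v \in W).
  move=> xW yW; apply/negPn/negP => nc; apply: (ncut v); split=> //.
  by exists x, y.
have -> : W :\ v = W by apply/setDidPl; rewrite disjoint_sym disjoints1.
exact: cW.
Qed.

Lemma biconnectedU3 (W1 W2 W3 : {set T}) :
  biconnected e W1 -> biconnected e W2 -> biconnected e W3 ->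
  (forall v, [\/ touch (W1 :\ v) (W2 :\ v) /\ touch (W2 :\ v) (W3 :\ v),
                 touch (W1 :\ v) (W2 :\ v) /\ touch (W1 :\ v) (W3 :\ v) |
                 touch (W1 :\ v) (W3 :\ v) /\ touch (W2 :\ v) (W3 :\ v)]) ->
  biconnected e (W1 :|: W2 :|: W3).
Proof.
move=> b1 b2 b3 tv; have [/set0Pn [x0 x0W] _] := b1.
split; first by apply/set0Pn; exists x0; rewrite !inE x0W.
split.
  have [_ [c1 _]] := b1; have [_ [c2 _]] := b2; have [_ [c3 _]] := b3.
  apply: connected_inU3 => //.
  have tD1 A B : touch (A :\ x0) (B :\ x0) -> touch A B by apply: touchS; apply: subsetDl.
  by case: (tv x0) => [] [/tD1 t /tD1 t']; [apply: Or31 | apply: Or32 | apply: Or33].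
move=> v [_ [x [y [xU yU nc]]]].
have eqU : (W1 :|: W2 :|: W3) :\ v = (W1 :\ v) :|: (W2 :\ v) :|: (W3 :\ v).
  by rewrite !setDUl.
move: xU yU nc; rewrite eqU => xU yU /negP; apply.
by apply: (connected_inU3 (connected_inD1 (v := v) b1) (connected_inD1 (v := v) b2)
  (connected_inD1 (v := v) b3) (tv v)).
Qed.

Lemma biconnectedU (W1 W2 : {set T}) : biconnected e W1 -> biconnected e W2 ->
  (forall v, touch (W1 :\ v) (W2 :\ v)) -> biconnected e (W1 :|: W2).
Proof.
move=> b1 b2 t; rewrite -(setUid W2) setUA; apply: biconnectedU3 => // v.
apply: Or31; split=> //; have [x [y [_ yW _]]] := t v.
by exists y, y; rewrite yW eqxx.
Qed.

End Connectivity.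

Section Blocks.
Variables (T : finType) (e : rel T) (C : {set T}).
Hypothesis esym : symmetric e.

Lemma block_eqU3 (B1 B2 B3 : {set T}) : block e C B1 -> block e C B2 -> block e C B3 ->
  biconnected e (B1 :|: B2 :|: B3) -> B1 = B2.
Proof.
move=> [s1 _ m1] [s2 _ m2] [s3 _ m3] b.
have sU : B1 :|: B2 :|: B3 \subset C by rewrite !subUset s1 s2 s3.
have <- : B1 :|: B2 :|: B3 = B1 by apply: m1; rewrite // -setUA subsetUl.
by apply: m2; rewrite // setUAC subsetUr.
Qed.

Lemma block_eq_common2 (B B' : {set T}) x y : block e C B -> block e C B' ->
  x \in B -> x \in B' -> y \in B -> y \in B' -> x != y -> B = B'.
Proof.
move=> k k' xB xB' yB yB' xy; apply: (block_eqU3 k k' k').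
rewrite -setUA setUid; have [_ b _] := k; have [_ b' _] := k'.
apply: biconnectedU => // v; have [->|vx] := eqVneq v x.
  by apply: (touchD1 yB yB'); rewrite ?eqxx // eq_sym.
by apply: (touchD1 xB xB'); rewrite ?eqxx // eq_sym.
Qed.

Lemma block_eq_edge (B B' : {set T}) a x y : block e C B -> block e C B' ->
  a \in B -> a \in B' -> x \in B -> y \in B' -> x != a -> y != a -> e x y -> B = B'.
Proof.
move=> k k' aB aB' xB yB' xa ya exy; apply: (block_eqU3 k k' k').
rewrite -setUA setUid; have [_ b _] := k; have [_ b' _] := k'.
apply: biconnectedU => // v; have [->|va] := eqVneq v a.
  by apply: (touchD1 xB yB'); rewrite ?exy ?orbT.
by apply: (touchD1 aB aB'); rewrite ?eqxx // eq_sym.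
Qed.

(* The chain closes into a cycle of blocks: removing any one vertex still leaves
   B1, B2, B3 linked, so their union is biconnected. *)
Lemma block_eq_chain (B1 B2 B3 : {set T}) p q x y :
  block e C B1 -> block e C B2 -> block e C B3 ->
  p \in B1 -> p \in B2 -> q \in B2 -> q \in B3 -> x \in B1 -> y \in B3 ->
  (x == y) || e x y -> p != q -> x != p -> y != p -> x != q -> y != q -> B1 = B2.
Proof.
move=> k1 k2 k3 p1 p2 q2 q3 x1 y3 l pq xp yp xq yq; apply: (block_eqU3 k1 k2 k3).
have [_ b1 _] := k1; have [_ b2 _] := k2; have [_ b3 _] := k3.
apply: biconnectedU3 => // v.
have [->|vp] := eqVneq v p.
  by apply: Or33; split; [apply: (touchD1 x1 y3) | apply: (touchD1 q2 q3)];
    rewrite ?eqxx // eq_sym.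
have [->|vq] := eqVneq v q.
  by apply: Or32; split; [apply: (touchD1 p1 p2) | apply: (touchD1 x1 y3)];
    rewrite ?eqxx // eq_sym.
by apply: Or31; split; [apply: (touchD1 p1 p2) | apply: (touchD1 q2 q3)];
  rewrite ?eqxx // eq_sym.
Qed.

End Blocks.

Section Minor.
Variable T : finType.

(* Bags are pushed forward along f; the bags containing w form a subtree because
   they cover the connected branch set f^-1(w). *)
Lemma tw_le_minor (k : nat) (W W' : {set T}) (e e' : rel T) (f : T -> T) :
  tw_le k W e ->
  (forall w, w \in W' -> exists2 x, x \in W & f x = w) ->
  (forall w, w \in W' -> connected_in e [set x in W | f x == w]) ->
  (forall u v, u \in W' -> v \in W' -> e' u v ->
     exists x y, [/\ x \in W, y \in W, f x = u, f y = v & e x y]) ->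
  tw_le k W' e'.
Proof.
move=> [I [r [bag [tr [bsub bsz] cov edg con]]]] surj bc el.
pose bag' i := f @: [set x in bag i | f x \in W'].
have bag'P i x : x \in bag i -> f x \in W' -> f x \in bag' i.
  by move=> xi fx; apply/imsetP; exists x => //; rewrite inE xi fx.
exists I, r, bag'; split=> //.
- split=> i.
    by apply/subsetP => w /imsetP [x]; rewrite inE => /andP[_ fxW] ->.
  apply: leq_trans (leq_imset_card _ _) (leq_trans _ (bsz i)).
  by apply: subset_leq_card; apply/subsetP => x; rewrite inE => /andP[].
- move=> w wW; have [x xW fx] := surj w wW; have [i xi] := cov x xW.
  by exists i; rewrite -fx bag'P // fx.
- move=> u v uW vW euv; have [x [y [xW yW fx fy exy]]] := el u v uW vW euv.
  have [i /andP[xi yi]] := edg x y xW yW exy.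
  by exists i; rewrite -fx -fy !bag'P // ?fx ?fy.
move=> w wW i j /imsetP[x0]; rewrite inE => /andP[x0i _] fx0.
move=> /imsetP[y0]; rewrite inE => /andP[y0j _] fy0.
set r' := (X in connect X).
pose beta := [set x in W | f x == w].
have lift x i1 m : x \in beta -> x \in bag i1 -> x \in bag m -> connect r' i1 m.
  rewrite inE => /andP[xW /eqP fx] xi xm.
  apply: connect_sub (con x xW i1 m xi xm) => a b /= /and3P[rab xa xb].
  by apply: connect1; rewrite /r' /= rab -fx !bag'P // fx.
have walk p x i1 : x \in beta -> x \in bag i1 ->
    path (restr e beta) x p -> forall j, last x p \in bag j -> connect r' i1 j.
  elim: p x i1 => [|z p IH] x i1 xb xi /=; first by move=> _ j1 xj; apply: (lift x).
  case/andP=> /and3P[exz _ zb] pp j1 lj.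
  have xW : x \in W by move: xb; rewrite inE => /andP[].
  have zW : z \in W by move: zb; rewrite inE => /andP[].
  have [m /andP[xm zm]] := edg x z xW zW exz.
  exact: connect_trans (lift x _ _ xb xi xm) (IH z m zb zm pp j1 lj).
have x0b : x0 \in beta by rewrite inE fx0 eqxx (subsetP (bsub i) _ x0i).
have y0b : y0 \in beta by rewrite inE fy0 eqxx (subsetP (bsub j) _ y0j).
have /connectP [p pp pl] := bc w wW x0 y0 x0b y0b.
by apply: (walk p x0) => //; rewrite -pl.
Qed.

Lemma tw_le_sub (k : nat) (W W' : {set T}) (e e' : rel T) :
  tw_le k W e -> W' \subset W ->
  (forall u v, u \in W' -> v \in W' -> e' u v -> e u v) -> tw_le k W' e'.
Proof.
move=> tw sW ee; apply: (tw_le_minor (f := id) tw).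
- by move=> w wW; exists w => //; apply: (subsetP sW).
- move=> w wW x y; rewrite !inE => /andP[_ /eqP ->] /andP[_ /eqP ->].
  exact: connect0.
- move=> u v uW vW euv; exists u, v; split=> //; try exact: (subsetP sW).
  exact: ee.
Qed.

End Minor.

Section TreeJoin.
Variables (I1 I2 : finType) (r1 : rel I1) (r2 : rel I2) (i1 : I1) (i2 : I2).

Definition tree_join : rel (I1 + I2) := fun a b =>
  match a, b with
  | inl x, inl y => r1 x y
  | inr x, inr y => r2 x y
  | inl x, inr y => (x == i1) && (y == i2)
  | inr x, inl y => (x == i2) && (y == i1)
  end.

Lemma is_tree_join : is_tree r1 -> is_tree r2 -> is_tree tree_join.
Proof.
move=> [s1 ir1 n1 c1 E1] [s2 ir2 n2 c2 E2].
have rsym : symmetric tree_join.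
  by move=> [x|x] [y|y] /=; [apply: s1 | rewrite andbC | rewrite andbC | apply: s2].
have hub a : connect tree_join a (inl i1).
  case: a => [x|y]; first by apply: connect_homo (c1 x i1) => a b.
  apply: (@connect_trans _ _ (inr i2)); first by apply: connect_homo (c2 y i2) => a b.
  by apply: connect1; rewrite /= !eqxx.
split=> //.
- by move=> [x|x] /=; rewrite ?ir1 ?ir2.
- by rewrite card_sum addn_gt0 n1.
- by move=> a b; rewrite (connect_trans (hub a)) // (sym_connect_sym rsym) hub.
pose A1 := (fun p : I1 * I1 => (inl p.1, inl p.2) : (I1 + I2) * (I1 + I2))
             @: [set p | r1 p.1 p.2].
pose A2 := (fun p : I2 * I2 => (inr p.1, inr p.2) : (I1 + I2) * (I1 + I2))
             @: [set p | r2 p.1 p.2].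
pose P := [set (inl i1, inr i2); (inr i2, inl i1)] : {set (I1 + I2) * (I1 + I2)}.
have inA1 a b : ((a, b) \in A1) = (if (a, b) is (inl x, inl y) then r1 x y else false).
  case: a b => [x|x] [y|y]; last 3 first.
  - by apply/imsetP => [[[? ?] _ ]].
  - by apply/imsetP => [[[? ?] _ ]].
  - by apply/imsetP => [[[? ?] _ ]].
  by rewrite (mem_imset _ (x, y)) ?inE // => [[? ?] [? ?] [-> ->]].
have inA2 a b : ((a, b) \in A2) = (if (a, b) is (inr x, inr y) then r2 x y else false).
  case: a b => [x|x] [y|y]; last first.
  - by rewrite (mem_imset _ (x, y)) ?inE // => [[? ?] [? ?] [-> ->]].
  - by apply/imsetP => [[[? ?] _ ]].
  - by apply/imsetP => [[[? ?] _ ]].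
  - by apply/imsetP => [[[? ?] _ ]].
have -> : [set p | tree_join p.1 p.2] = A1 :|: A2 :|: P.
  apply/setP => [[a b]]; rewrite !inE inA1 inA2.
  by case: a b => [x|x] [y|y]; rewrite /= ?xpair_eqE /= ?andbF ?orbF.
have d12 : A1 :&: A2 = set0.
  by apply/setP => [[a b]]; rewrite !inE inA1 inA2; case: a b => [x|x] [y|y]; rewrite ?andbF.
have d3 : (A1 :|: A2) :&: P = set0.
  apply/setP => [[a b]]; rewrite !inE inA1 inA2.
  by case: a b => [x|x] [y|y]; rewrite /= ?xpair_eqE /= ?andbF.
rewrite cardsU d3 cards0 subn0 cardsU d12 cards0 subn0 cards2 /= !card_imset.
- by rewrite E1 E2 card_sum; lia.
- by move=> [? ?] [? ?] [-> ->].
- by move=> [? ?] [? ?] [-> ->].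
Qed.

End TreeJoin.

Section Glue.
Variables (T : finType) (e : rel T).
Hypothesis esym : symmetric e.

Lemma glue_edge_side (W1 W2 : {set T}) u w :
  (forall x y, x \in W1 -> x \notin W2 -> y \in W2 -> y \notin W1 -> ~~ e x y) ->
  u \in W1 :|: W2 -> w \in W1 :|: W2 -> e u w ->
  (u \in W1) && (w \in W1) || (u \in W2) && (w \in W2).
Proof.
move=> cross /setUP uW /setUP wW euw.
have [u1|u1] := boolP (u \in W1); have [w1|w1] := boolP (w \in W1) => //=.
- have w2 : w \in W2 by case: wW; rewrite ?(negbTE w1).
  by apply: contraTT euw; rewrite w2 andbT => u2; apply: cross.
- have u2 : u \in W2 by case: uW; rewrite ?(negbTE u1).
  by apply: contraTT euw; rewrite u2 /= => w2; rewrite esym; apply: cross.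
- by case: uW; case: wW; rewrite ?(negbTE u1) ?(negbTE w1) // => -> ->.
Qed.

(* The two decomposition trees are joined by an edge between bags containing v. *)
Lemma tw_le_glue k (W1 W2 : {set T}) v :
  tw_le k W1 e -> tw_le k W2 e ->
  (forall x, x \in W1 -> x \in W2 -> x = v) ->
  (forall x y, x \in W1 -> x \notin W2 -> y \in W2 -> y \notin W1 -> ~~ e x y) ->
  tw_le k (W1 :|: W2) e.
Proof.
move=> [I1 [r1 [b1 [tr1 [bs1 bz1] cov1 ed1 con1]]]].
move=> [I2 [r2 [b2 [tr2 [bs2 bz2] cov2 ed2 con2]]]] inter cross.
have [i1 hi1] : exists i : I1, v \in W1 -> v \in b1 i.
  have [vW|vW] := boolP (v \in W1); first by have [i vi] := cov1 v vW; exists i.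
  by have [_ _ /card_gt0P [i _] _ _] := tr1; exists i.
have [i2 hi2] : exists i : I2, v \in W2 -> v \in b2 i.
  have [vW|vW] := boolP (v \in W2); first by have [i vi] := cov2 v vW; exists i.
  by have [_ _ /card_gt0P [i _] _ _] := tr2; exists i.
pose bag (a : I1 + I2) := match a with inl x => b1 x | inr y => b2 y end.
exists (I1 + I2)%type, (tree_join r1 r2 i1 i2), bag; split.
- exact: is_tree_join.
- split=> [[x|x]|[x|x]] //=; [exact: subset_trans (bs1 x) (subsetUl _ _) |
                               exact: subset_trans (bs2 x) (subsetUr _ _)].
- move=> u /setUP[uW|uW].
    by have [i ui] := cov1 u uW; exists (inl i).
  by have [i ui] := cov2 u uW; exists (inr i).
- move=> u w uW wW euw; case/orP: (glue_edge_side cross uW wW euw) => /andP[uW' wW'].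
    by have [i hi] := ed1 u w uW' wW' euw; exists (inl i).
  by have [i hi] := ed2 u w uW' wW' euw; exists (inr i).
move=> u uW [x|x] [y|y] /= ux uy.
- by apply: connect_homo (con1 u (subsetP (bs1 x) _ ux) x y ux uy) => a b.
- have uv : u = v by apply: inter; [apply: (subsetP (bs1 x)) | apply: (subsetP (bs2 y))].
  subst u; have vW1 := subsetP (bs1 x) _ ux; have vW2 := subsetP (bs2 y) _ uy.
  apply: (@connect_trans _ _ (inl i1)).
    by apply: connect_homo (con1 v vW1 x i1 ux (hi1 vW1)) => a b.
  apply: (@connect_trans _ _ (inr i2)); first by apply: connect1; rewrite /= !eqxx hi1 // hi2.
  by apply: connect_homo (con2 v vW2 i2 y (hi2 vW2) uy) => a b.
- have uv : u = v by apply: inter; [apply: (subsetP (bs1 y)) | apply: (subsetP (bs2 x))].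
  subst u; have vW1 := subsetP (bs1 y) _ uy; have vW2 := subsetP (bs2 x) _ ux.
  apply: (@connect_trans _ _ (inr i2)).
    by apply: connect_homo (con2 v vW2 x i2 ux (hi2 vW2)) => a b.
  apply: (@connect_trans _ _ (inl i1)); first by apply: connect1; rewrite /= !eqxx hi1 // hi2.
  by apply: connect_homo (con1 v vW1 i1 y (hi1 vW1) uy) => a b.
- by apply: connect_homo (con2 u (subsetP (bs2 x) _ ux) x y ux uy) => a b.
Qed.

End Glue.

Section Contraction.
Variables (T : finType) (V B : {set T}) (e : rel T) (a : T).
Hypotheses (esym : symmetric e) (BV : B \subset V) (aB : a \in B).

Lemma mem_contract_V x : x \in V -> x \notin B -> x \in contract_V V B a.
Proof. by move=> xV xB; rewrite !inE xV (negbTE xB) andbF. Qed.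

Lemma contract_e_sym : symmetric (contract_e V e B a).
Proof.
move=> x y; rewrite /contract_e /= eq_sym.
by have [->|xa] := eqVneq x a; have [->|ya] := eqVneq y a; rewrite 1?esym.
Qed.

Lemma contract_e_nbh x v : x \in B -> v \in V -> v \notin B -> e x v -> contract_e V e B a a v.
Proof.
move=> xB vV vB exv; rewrite /contract_e /= eqxx.
by apply/andP; split; [apply: contraNneq vB => <- | apply/nbhP; exists x].
Qed.

Lemma contract_e_out u v : u \notin B -> v \notin B ->
  contract_e V e B a u v = (u != v) && e u v.
Proof.
move=> uB vB; have ua : u != a by apply: contraNneq uB => ->.
have va : v != a by apply: contraNneq vB => ->.
by rewrite /contract_e /= (negbTE ua) (negbTE va).
Qed.

Lemma tw_le_contract_disjoint k (S : {set T}) : connected_in e B -> [disjoint B & S] ->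
  tw_le k (V :\: S) e -> tw_le k (contract_V V B a :\: S) (contract_e V e B a).
Proof.
move=> cB dBS tw; pose f x := if x \in B then a else x.
have SnB x : x \in B -> x \notin S by move=> xB; rewrite (disjointFr dBS xB).
have inW x : x \in contract_V V B a :\: S -> x \in V :\: S.
  by rewrite !inE => /and3P[-> _ ->].
have fid x : x \in contract_V V B a :\: S -> f x = x.
  rewrite !inE /f => /and3P[_ xBa _]; case: ifP => // xB.
  by move: xBa; rewrite xB andbT negbK eq_sym => /eqP.
have BW x : x \in B -> x \in V :\: S by move=> xB; rewrite inE SnB ?(subsetP BV).
apply: (tw_le_minor (f := f) tw).
- move=> w wW; exists w; [exact: inW | exact: fid].
- move=> w _; have [->|wa] := eqVneq w a.
    have fB x : x \in [set y in V :\: S | f y == a] -> x \in B.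
      by rewrite !inE /f; case: ifP => // xB /andP[_ /eqP xa]; rewrite -xB xa.
    move=> x y /fB xB /fB yB; apply: connect_restrS (cB x y xB yB).
    by apply/subsetP => z zB; rewrite inE BW //= /f zB.
  move=> x y; rewrite !inE /f.
  have fw z : (if z \in B then a else z) == w -> z = w.
    by case: ifP => _ /eqP // aw; rewrite aw eqxx in wa.
  by move=> /andP[_ /fw ->] /andP[_ /fw ->].
- move=> u v uW vW; rewrite /contract_e /= => /andP[uv].
  have [ua|ua] := eqVneq u a.
    case/nbhP => [z zB [ezv vV vB]]; exists z, v.
    by split; [exact: BW | exact: inW | rewrite /f zB ua | rewrite /f (negbTE vB) |].
  have [va|va] := eqVneq v a.
    case/nbhP => [z zB [ezu uV uB]]; exists u, z.
    by split; [exact: inW | exact: BW | rewrite /f (negbTE uB) | rewrite /f zB va | rewrite esym].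
  by move=> euv; exists u, v; split; rewrite ?inW ?fid.
Qed.

Lemma tw_le_contract_meet k (S : {set T}) : tw_le k (V :\: S) e ->
  tw_le k (contract_V V B a :\: (S :\: B :|: [set a])) (contract_e V e B a).
Proof.
move=> tw; apply: (tw_le_sub tw).
  apply/subsetP => x; rewrite !inE => /and3P[/norP[xSB xa] xBa xV].
  rewrite xV andbT; apply: contra xSB => xS; rewrite xS andbT.
  by apply: contra xBa => xB; rewrite xa.
move=> u v; rewrite !inE => /and3P[/norP[_ ua] _ _] /and3P[/norP[_ va] _ _].
by rewrite /contract_e /= (negbTE ua) (negbTE va) => /andP[].
Qed.

Lemma has_solution_contract t : connected_in e B ->
  has_solution V e t -> has_solution (contract_V V B a) (contract_e V e B a) t.
Proof.
move=> cB [S [SV St tw]]; have [dBS|mBS] := boolP [disjoint B & S].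
  exists S; split=> //; last exact: tw_le_contract_disjoint.
  apply/subsetP => x xS; rewrite mem_contract_V ?(subsetP SV) //.
  by apply: contraL xS => xB; rewrite (disjointFr dBS xB).
exists (S :\: B :|: [set a]); split; last exact: tw_le_contract_meet.
- rewrite subUset sub1set; apply/andP; split.
    apply/subsetP => x; rewrite inE => /andP[xB xS].
    exact: mem_contract_V (subsetP SV _ xS) xB.
  by rewrite !inE eqxx (subsetP BV _ aB).
- apply: leq_trans St; rewrite cardsU cards1 -(cardsID B S).
  by move: mBS; rewrite -setI_eq0 -card_gt0 setIC; lia.
Qed.

End Contraction.

Section PathOfBlocks.
Variables (T : finType) (V : {set T}) (e : rel T) (C B1 B2 B3 : {set T}) (a1 a2 a3 a4 : T).
Hypotheses (esym : symmetric e) (eirr : irreflexive e).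
Hypotheses (k1 : block e C B1) (k2 : block e C B2) (k3 : block e C B3).
Hypotheses (a1B1 : a1 \in B1) (a2B1 : a2 \in B1) (a2B2 : a2 \in B2).
Hypotheses (a3B2 : a3 \in B2) (a3B3 : a3 \in B3) (a4B3 : a4 \in B3).
Hypotheses (n12 : a1 != a2) (n14 : a1 != a4) (n23 : a2 != a3) (n34 : a3 != a4).
Hypotheses (m12 : B1 != B2) (m23 : B2 != B3).
Hypothesis CV : C \subset V.

Local Notation D := (B1 :|: B2 :|: B3).
Local Notation I := (D :\: [set a1; a4]).

Hypothesis nbhI : nbh V e I = [set a1; a4].
Hypothesis twD : tw_le 2 D e.

Lemma B1B2_meet w : w \in B1 -> w \in B2 -> w = a2.
Proof.
move=> wB1 wB2; apply/eqP; apply: contraTT m12 => wa; apply/negPn/eqP.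
exact: (block_eq_common2 esym k1 k2 wB1 wB2 a2B1 a2B2 wa).
Qed.

Lemma B2B3_meet w : w \in B2 -> w \in B3 -> w = a3.
Proof.
move=> wB2 wB3; apply/eqP; apply: contraTT m23 => wa; apply/negPn/eqP.
exact: (block_eq_common2 esym k2 k3 wB2 wB3 a3B2 a3B3 wa).
Qed.

Lemma B1B3_disjoint w : w \in B1 -> w \notin B3.
Proof.
move=> wB1; apply/negP => wB3.
have wa2 : w != a2.
  by apply/eqP => wa; move: n23; rewrite -(B2B3_meet a2B2) ?eqxx // -wa.
have wa3 : w != a3.
  by apply/eqP => wa; move: n23; rewrite (B1B2_meet (w := a3)) ?eqxx // -wa.
apply: (negP m12); apply/eqP.
by apply: (block_eq_chain esym k1 k2 k3 a2B1 a2B2 a3B2 a3B3 wB1 wB3 _ n23 wa2 wa2 wa3 wa3);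
  rewrite eqxx.
Qed.

Lemma B1_B23_no_edge x y : y \in B1 -> y != a2 -> x \in B2 :|: B3 -> x != a2 -> ~~ e y x.
Proof.
move=> yB ya xB23 xa; apply/negP => eyx; apply: (negP m12); apply/eqP.
have [xB2|xB2] := boolP (x \in B2).
  exact: (block_eq_edge esym k1 k2 a2B1 a2B2 yB xB2 ya xa eyx).
have xB3 : x \in B3 by move: xB23; rewrite inE (negbTE xB2).
have ya3 : y != a3.
  by apply/eqP => yeq; move: ya; rewrite (B1B2_meet (w := y)) ?eqxx // yeq.
have xa3 : x != a3 by apply: contraNneq xB2 => ->.
by apply: (block_eq_chain esym k1 k2 k3 a2B1 a2B2 a3B2 a3B3 yB xB3 _ n23 ya xa ya3 xa3);
  rewrite eyx orbT.
Qed.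

Lemma a4_notin_B1 : a4 \notin B1.
Proof. by apply: contraL a4B3; apply: B1B3_disjoint. Qed.

Lemma D_subset_V : D \subset V.
Proof.
by case: k1 k2 k3 => [s1 _ _] [s2 _ _] [s3 _ _]; rewrite !subUset !(subset_trans _ CV).
Qed.

Lemma notin_interior_end x : x \in D -> x \notin I -> (x == a1) || (x == a4).
Proof. by rewrite !inE negb_and negbK => ->; rewrite orbF. Qed.

Lemma B1_interior x : x \in B1 -> x \notin I -> x = a1.
Proof.
move=> xB xI; have xD : x \in D by rewrite !inE xB.
have /orP[/eqP //|/eqP xa4] := notin_interior_end xD xI.
by move: a4_notin_B1; rewrite -xa4 xB.
Qed.

Lemma interior_nbh x y : x \in I -> y \in V -> y \notin I -> e x y -> (y == a1) || (y == a4).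
Proof.
move=> xI yV yI exy; have : y \in nbh V e I by apply/nbhP; exists x.
by rewrite nbhI !inE.
Qed.

Lemma contract_e_outside u v : u \in V -> u \notin I -> v \in V -> v \notin I -> e u v ->
  contract_e V e B1 a1 u v.
Proof.
move=> uV uI vV vI euv; have uv : u != v by apply: contraTneq euv => ->; rewrite eirr.
have [uB|uB] := boolP (u \in B1).
  rewrite (B1_interior uB uI); apply: (contract_e_nbh a1B1 uB vV _ euv).
  by apply: contra uv => vB; rewrite (B1_interior uB uI) (B1_interior vB vI).
have [vB|vB] := boolP (v \in B1); last by rewrite contract_e_out // uv.
rewrite contract_e_sym // (B1_interior vB vI); apply: (contract_e_nbh a1B1 vB uV uB).
by rewrite esym.
Qed.

Lemma tw_le_outside (S S' : {set T}) : S' \subset S :|: I ->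
  tw_le 2 (contract_V V B1 a1 :\: S') (contract_e V e B1 a1) -> tw_le 2 (V :\: I :\: S) e.
Proof.
move=> sS' tw'; apply: (tw_le_sub tw').
  apply/subsetP => x; rewrite [x \in _ :\: S]inE [x \in V :\: I]inE => /and3P[xS xI xV].
  rewrite inE; apply/andP; split.
    by apply/negP => /(subsetP sS'); rewrite inE (negbTE xS) (negbTE xI).
  rewrite !inE xV negb_and negbK orbC; have [xB|//] := boolP (x \in B1).
  by rewrite (B1_interior xB xI) eqxx.
move=> u v; rewrite ![_ \in V :\: I :\: S]inE ![_ \in V :\: I]inE.
move=> /and3P[_ uI uV] /and3P[_ vI vV]; exact: contract_e_outside.
Qed.

Lemma tw_le_hit_end (S : {set T}) : tw_le 2 (V :\: I :\: S) e ->
  (a1 \in S) || (a4 \in S) -> tw_le 2 (V :\: S) e.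
Proof.
move=> twQ hS; have DV := D_subset_V.
have -> : V :\: S = (V :\: I :\: S) :|: (D :\: S).
  apply/setP => x; rewrite [in RHS]inE ![x \in _ :\: S]inE [x \in V :\: I]inE.
  case: (x \in S) => //=; have [xD|xD] := boolP (x \in D).
    by rewrite (subsetP DV _ xD) orbT.
  by rewrite orbF [x \in I]inE (negbTE xD) andbF.
have twDS : tw_le 2 (D :\: S) e by apply: (tw_le_sub twD) => //; apply: subsetDl.
apply: (tw_le_glue esym (v := if a1 \in S then a4 else a1) twQ twDS).
  move=> x /setDP[/setDP[_ xI] xS] /setDP[xD _].
  case/orP: (notin_interior_end xD xI) => /eqP xa; subst x.
    by rewrite (negbTE xS) in hS *.
  by case: ifP => [_ // | a1S]; rewrite a1S (negbTE xS) in hS.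
move=> x y /setDP[/setDP[xV xI] xS] hx /setDP[yD yS] hy.
have yI : y \in I.
  by apply: contraNT hy => yI; rewrite in_setD yS in_setD yI (subsetP DV _ yD).
apply/negP => exy; have := interior_nbh yI xV xI; rewrite esym => /(_ exy).
by case/orP=> /eqP xa; move: hx; rewrite in_setD xS xa !inE ?a1B1 ?a4B3 ?orbT.
Qed.

Lemma D_edge_out x y : x \in D -> y \in V -> y \notin D -> e x y -> (x == a1) || (x == a4).
Proof.
move=> xD yV yD exy; have [xI|xI] := boolP (x \in I); last exact: notin_interior_end.
by case/orP: (interior_nbh xI yV (contra (subsetP (subsetDl _ _) y) yD) exy) => /eqP ya;
  rewrite ya !inE ?a1B1 ?a4B3 ?orbT in yD.
Qed.

Local Notation H := ((B2 :|: B3) :\: [set a2; a4]).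

Lemma a4_notin_B2 : a4 \notin B2.
Proof. by apply: contra n34 => /B2B3_meet/(_ a4B3) <-. Qed.

Lemma a2_notin_B3 : a2 \notin B3.
Proof. exact: B1B3_disjoint. Qed.

Lemma H_notin_B1 x : x \in H -> x \notin B1.
Proof.
case/setDP; rewrite !inE negb_or => /orP[] xB /andP[xa2 _]; apply/negP => xB1.
  by rewrite (B1B2_meet xB1 xB) eqxx in xa2.
by rewrite (negbTE (B1B3_disjoint xB1)) in xB.
Qed.

Lemma H_subset_interior : H \subset I.
Proof.
apply/subsetP => x xH; have xnB1 := H_notin_B1 xH.
case/setDP: xH; rewrite !inE negb_or => xB /andP[_ xa4].
by rewrite negb_or xa4 andbT -orbA xB orbT andbT; apply: contraNneq xnB1 => ->.
Qed.

Lemma a3_in_H : a3 \in H.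
Proof. by rewrite !inE negb_or a3B2 (eq_sym a3) n23 n34. Qed.

Lemma H_eq : H = (B2 :\ a2) :|: (B3 :\ a4).
Proof.
apply/setP => x; rewrite !inE negb_or.
have [->|xa2] /= := eqVneq x a2; first by rewrite (negbTE a2_notin_B3) andbF.
by have [->|xa4] /= := eqVneq x a4; first by rewrite (negbTE a4_notin_B2).
Qed.

Lemma connected_H : connected_in e H.
Proof.
rewrite H_eq; have [_ b2 _] := k2; have [_ b3 _] := k3.
apply: (connected_inU esym (connected_inD1 (v := a2) b2) (connected_inD1 (v := a4) b3)).
by exists a3, a3; rewrite !inE eqxx a3B2 a3B3 (eq_sym a3) n23 n34.
Qed.

Lemma nbh_H : nbh V e H = [set a2; a4].
Proof.
have DV := D_subset_V.
apply/eqP; rewrite eqEsubset; apply/andP; split; last first.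
  have [[_ [_ [c2 _]] _] [_ [_ [c3 _]] _]] := (k2, k3).
  apply/subsetP => y /set2P[->|->].
    apply: (nbh_connected_in esym eirr c2 a2B2 a3B2 n23); first by rewrite H_eq subsetUl.
      by rewrite (subsetP DV) // !inE a2B1.
    by rewrite !inE eqxx.
  apply: (nbh_connected_in esym eirr c3 a4B3 a3B3); first by rewrite eq_sym.
  - by rewrite H_eq subsetUr.
  - by rewrite (subsetP DV) // !inE a4B3 !orbT.
  - by rewrite !inE eqxx orbT.
apply/subsetP => y /nbhP[x xH [exy yV yH]]; rewrite !inE; apply/negPn/negP.
rewrite negb_or => /andP[ya2 ya4].
have yB1 : y \in B1.
  have [yI|yI] := boolP (y \in I); last first.
    case/orP: (interior_nbh (subsetP H_subset_interior _ xH) yV yI exy) => /eqP ya.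
      by rewrite ya a1B1.
    by rewrite ya eqxx in ya4.
  case/setDP: yI => yD _; rewrite -setUA in yD; case/setUP: yD => // yB23.
  by move: yH; rewrite in_setD yB23 !inE (negbTE ya2) (negbTE ya4).
case/setDP: xH => xB23; rewrite !inE negb_or => /andP[xa2 _].
by move: exy; rewrite esym (negbTE (B1_B23_no_edge yB1 ya2 xB23 xa2)).
Qed.

Section AvoidingD.
Variable S : {set T}.
Hypothesis dDS : [disjoint D & S].

Local Notation Q := (V :\: I :\: S).

Lemma D_notin_S x : x \in D -> x \notin S.
Proof. by move=> xD; rewrite (disjointFr dDS xD). Qed.

Lemma end_in_Q x : x \in D -> x \notin I -> x \in Q.
Proof. by move=> xD xI; rewrite in_setD D_notin_S // in_setD xI (subsetP D_subset_V). Qed.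

Lemma a1_in_Q : a1 \in Q.
Proof. by apply: end_in_Q; rewrite !inE ?eqxx ?a1B1. Qed.

Lemma a4_in_Q : a4 \in Q.
Proof. by apply: end_in_Q; rewrite !inE ?eqxx ?a4B3 ?orbT. Qed.

Lemma mem_Q x : x \in Q -> [/\ x \in V, x \notin I & x \notin S].
Proof. by case/setDP=> /setDP[]. Qed.

Section Separated.
Hypothesis twQ : tw_le 2 Q e.
Hypothesis na14 : ~~ connect (restr e Q) a1 a4.

Local Notation Q1 := [set x in Q | connect (restr e Q) a1 x].

Lemma Q1_closed x y : x \in Q1 -> y \in Q -> e x y -> y \in Q1.
Proof.
case/setIdP=> xQ cx yQ exy; rewrite inE yQ (connect_trans cx) // connect1 //.
by rewrite /restr /= exy xQ yQ.
Qed.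

Lemma a1_in_Q1 : a1 \in Q1.
Proof. by rewrite inE a1_in_Q connect0. Qed.

Lemma a4_notin_Q1 : a4 \notin Q1.
Proof. by rewrite inE (negbTE na14) andbF. Qed.

Lemma tw_le_DQ1 : tw_le 2 (D :|: Q1) e.
Proof.
have Q1Q : Q1 \subset Q by apply/subsetP => x /setIdP[].
apply: (tw_le_glue esym (v := a1) twD (tw_le_sub twQ Q1Q (fun _ _ _ _ h => h))).
  move=> x xD xQ1; have [_ xI _] := mem_Q (subsetP Q1Q _ xQ1).
  case/orP: (notin_interior_end xD xI) => /eqP xa //.
  by rewrite xa (negbTE a4_notin_Q1) in xQ1.
move=> x y xD xQ1 yQ1 yD; apply/negP => exy; have [yV _ _] := mem_Q (subsetP Q1Q _ yQ1).
case/orP: (D_edge_out xD yV yD exy) => /eqP xa; first by rewrite xa a1_in_Q1 in xQ1.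
by move: xQ1; rewrite xa (Q1_closed yQ1 a4_in_Q) // esym -xa.
Qed.

Lemma setD_split : V :\: S = (D :|: Q1) :|: (Q :\: Q1).
Proof.
apply/setP => x; apply/idP/idP.
  case/setDP=> xV xS; apply/setUP.
  have [xD|xD] := boolP (x \in D); first by left; apply/setUP; left.
  have xQ : x \in Q by rewrite in_setD xS in_setD xV andbT; apply: contra xD => /setDP[].
  by have [xQ1|xQ1] := boolP (x \in Q1); [left; apply/setUP; right | right; apply/setDP].
case/setUP => [/setUP[xD|/setIdP[xQ _]]|/setDP[xQ _]].
- by rewrite in_setD D_notin_S ?(subsetP D_subset_V).
- by case/mem_Q: xQ => xV _ xS; rewrite in_setD xS xV.
- by case/mem_Q: xQ => xV _ xS; rewrite in_setD xS xV.
Qed.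

(* Glue D to Q1 along a1, then the rest of G - I - S along a4. *)
Lemma tw_le_separated : tw_le 2 (V :\: S) e.
Proof.
rewrite setD_split.
have twQ2 : tw_le 2 (Q :\: Q1) e by apply: tw_le_sub twQ (subsetDl _ _) _.
apply: (tw_le_glue esym (v := a4) tw_le_DQ1 twQ2).
  move=> x /setUP[xD|xQ1] /setDP[xQ xnQ1]; last by rewrite xQ1 in xnQ1.
  have [_ xI _] := mem_Q xQ; case/orP: (notin_interior_end xD xI) => /eqP xa //.
  by rewrite xa a1_in_Q1 in xnQ1.
move=> x y /setUP[xD|xQ1] hx /setDP[yQ ynQ1] yDQ1; apply/negP => exy; last first.
  by rewrite (Q1_closed xQ1 yQ) in ynQ1.
have yD : y \notin D by apply: contra yDQ1 => yD; apply/setUP; left.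
have [yV _ _] := mem_Q yQ; case/orP: (D_edge_out xD yV yD exy) => /eqP xa.
  by rewrite (Q1_closed a1_in_Q1 yQ) -?xa in ynQ1.
by move: hx; rewrite xa in_setD a4_in_Q a4_notin_Q1.
Qed.

End Separated.

Section Connected.
Hypothesis twS : tw_le 2 (contract_V V B1 a1 :\: S) (contract_e V e B1 a1).
Hypothesis c14 : connect (restr e Q) a1 a4.

Local Notation W := (contract_V V B1 a1 :\: S).
Local Notation R := [set x | connect (restr e (Q :\ a4)) a1 x].

Lemma mem_W x : x \in V -> x \notin S -> x \notin B1 -> x \in W.
Proof. by move=> xV xS xB; rewrite in_setD xS mem_contract_V. Qed.

Lemma a1_in_W : a1 \in W.
Proof.
have [a1V _ a1S] := mem_Q a1_in_Q.
by rewrite in_setD a1S in_setD in_setD1 eqxx a1V.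
Qed.

Lemma R_sub x : x \in R -> [/\ x \in V, x \notin I, x \notin S & x != a4].
Proof.
have a1Q : a1 \in Q :\ a4 by rewrite in_setD1 n14 a1_in_Q.
by rewrite inE => /(connect_restr_mem a1Q) /setD1P[xa4 /mem_Q[]].
Qed.

Lemma R_W x : x \in R -> x \in W.
Proof.
case/R_sub => xV xI xS _; rewrite in_setD xS in_setD in_setD1 negb_and negbK xV andbT.
by have [xB|xB] := boolP (x \in B1); rewrite ?xB ?orbT // (B1_interior xB xI) eqxx.
Qed.

Lemma a1_in_R : a1 \in R.
Proof. by rewrite inE connect0. Qed.

Lemma exists_R_edge_a4 : exists2 z, z \in R & e z a4.
Proof.
by have [z [cz ez]] := exists_last_edge a1_in_Q n14 c14; exists z; rewrite ?inE.
Qed.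

(* Contracting R, the component of a1 in G - I - S - a4, onto a2 (which is gone
   from G') turns a path from a1 to a4 into the torso edge a2 a4. *)
Definition fold_R x := if x \in R then a2 else x.

Definition lifted_edge u v :=
  exists x y, [/\ x \in W, y \in W, fold_R x = u, fold_R y = v & contract_e V e B1 a1 x y].

Lemma a2_notin_W : a2 \notin W.
Proof. by apply/negP => /setDP[/setDP[_]]; rewrite in_setD1 eq_sym n12 a2B1. Qed.

Lemma fold_R_fixed w : w \in H :|: [set a2; a4] -> w != a2 ->
  [/\ w \in W, fold_R w = w, w \in V & w \notin B1].
Proof.
move=> wH wa2; suff [wD wB1 wR] : [/\ w \in D, w \notin B1 & w \notin R].
  by rewrite /fold_R (negbTE wR) mem_W ?D_notin_S ?(subsetP D_subset_V).
case/setUP: wH => [wH|/set2P[wa|->]]; last 2 first.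
- by rewrite wa eqxx in wa2.
- split; [by rewrite !inE a4B3 !orbT | exact: a4_notin_B1 |].
  by apply/negP => /R_sub[_ _ _]; rewrite eqxx.
have wI := subsetP H_subset_interior _ wH.
split; [exact: subsetP (subsetDl _ _) _ wI | exact: H_notin_B1 |].
by apply/negP => /R_sub[_]; rewrite wI.
Qed.

Lemma fold_R_branch_a2 : [set x in W | fold_R x == a2] = R.
Proof.
apply/setP => x; rewrite [in LHS]inE /fold_R; case: ifP => xR; first by rewrite eqxx R_W.
by apply/negbTE; apply: contraNN a2_notin_W => /andP[xW /eqP <-].
Qed.

Lemma connected_in_R : connected_in (contract_e V e B1 a1) R.
Proof.
move=> x y xR yR.
apply: connect_sub (connected_in_component esym xR yR) => u v /and3P[euv uR vR].
apply: connect1; rewrite /restr /= uR vR !andbT.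
by have [uV uI _ _] := R_sub uR; have [vV vI _ _] := R_sub vR; apply: contract_e_outside.
Qed.

Lemma lifted_edge_sym u v : lifted_edge u v -> lifted_edge v u.
Proof. by case=> x [y [xW yW fx fy exy]]; exists y, x; rewrite contract_e_sym. Qed.

Lemma lifted_edge_a2 v : v \in H :|: [set a2; a4] -> v != a2 -> e a2 v -> lifted_edge a2 v.
Proof.
move=> vH va2 ev; have [vW fv vV vB] := fold_R_fixed vH va2.
exists a1, v; split; rewrite ?a1_in_W // /fold_R ?a1_in_R //.
exact: (contract_e_nbh a1B1 a2B1 vV vB ev).
Qed.

Lemma lifted_edge_a2a4 : lifted_edge a2 a4.
Proof.
have a4H : a4 \in H :|: [set a2; a4] by rewrite !inE eqxx !orbT.
have a4a2 : a4 != a2 by apply: contraNneq a2_notin_B3 => <-.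
have [z zR eza4] := exists_R_edge_a4; have [a4W fa4 a4V _] := fold_R_fixed a4H a4a2.
exists z, a4; split => //; [exact: R_W | by rewrite /fold_R zR |].
have [zV zI _ _] := R_sub zR; apply: contract_e_outside => //.
by rewrite !inE eqxx orbT.
Qed.

Lemma lifted_edge_torso u v : u \in H :|: [set a2; a4] -> v \in H :|: [set a2; a4] ->
  torso_rel V e H u v -> lifted_edge u v.
Proof.
move=> uH vH; rewrite /torso_rel /= nbh_H; case/orP => [|/and3P[u24 v24 uv]]; last first.
  case/set2P: u24 uv => ->; case/set2P: v24 => ->; rewrite ?eqxx // => _.
    exact: lifted_edge_a2a4.
  exact: lifted_edge_sym lifted_edge_a2a4.
have [->|ua2] := eqVneq u a2.
  have [->|va2] := eqVneq v a2; first by rewrite eirr.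
  exact: lifted_edge_a2.
have [->|va2] := eqVneq v a2.
  by move=> eua2; apply: lifted_edge_sym; apply: lifted_edge_a2; rewrite // esym.
move=> euv; have [uW fu _ uB] := fold_R_fixed uH ua2; have [vW fv _ vB] := fold_R_fixed vH va2.
exists u, v; split; rewrite // contract_e_out // euv andbT.
by apply: contraTneq euv => ->; rewrite eirr.
Qed.

Lemma tw_le_torso_H : tw_le 2 (H :|: [set a2; a4]) (torso_rel V e H).
Proof.
apply: (tw_le_minor (f := fold_R) twS _ _ lifted_edge_torso).
  move=> w wH; have [->|wa2] := eqVneq w a2.
    by exists a1; rewrite ?a1_in_W // /fold_R a1_in_R.
  by have [wW fw _ _] := fold_R_fixed wH wa2; exists w.
move=> w wH; have [->|wa2] := eqVneq w a2; first by rewrite fold_R_branch_a2; apply: connected_in_R.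
move=> x y /setIdP[_ /eqP fx] /setIdP[_ /eqP fy].
have fw z : fold_R z = w -> z = w.
  by rewrite /fold_R; case: ifP => // _ aw; rewrite aw eqxx in wa2.
by rewrite (fw x fx) (fw y fy) connect0.
Qed.

Lemma trivial_instance_of_connect t : trivial_instance V e t.
Proof.
right; right; right; exists H; split.
- exact: subset_trans H_subset_interior (subset_trans (subsetDl _ _) D_subset_V).
- by apply/set0Pn; exists a3; apply: a3_in_H.
- exact: connected_H.
- by rewrite nbh_H; apply: tw_le_torso_H.
Qed.

End Connected.

End AvoidingD.

Lemma has_solution_uncontract t : ~ trivial_instance V e t ->
  has_solution (contract_V V B1 a1) (contract_e V e B1 a1) t -> has_solution V e t.
Proof.
move=> ntriv [S' [S'V' S't twS']].
have S'V : S' \subset V := subset_trans S'V' (subsetDl _ _).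
have twQ S : S' \subset S :|: I -> tw_le 2 (V :\: I :\: S) e.
  by move=> sS; apply: tw_le_outside sS twS'.
have [SI|SI] := eqVneq (S' :&: I) set0; last first.
  exists (S' :\: I :|: [set a1]); split.
  - rewrite subUset sub1set (subset_trans (subsetDl _ _) S'V) (subsetP D_subset_V) //.
    by rewrite !inE a1B1.
  - apply: leq_trans S't; rewrite cardsU cards1 -(cardsID I S').
    by apply: leq_trans (leq_subr _ _) _; rewrite addnC leq_add2r card_gt0.
  - apply: tw_le_hit_end; last by rewrite !inE eqxx !orbT.
    apply: twQ; apply/subsetP => x xS; rewrite in_setU in_setU in_setD xS andbT.
    by case: (x \in I); rewrite ?orbT.
have [hit|miss] := boolP ((a1 \in S') || (a4 \in S')).
  by exists S'; split => //; apply: tw_le_hit_end (twQ _ (subsetUl _ _)) hit.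
have dDS : [disjoint D & S'].
  apply/pred0P => x /=; apply/negbTE/andP => -[xD xS]; have [xI|xI] := boolP (x \in I).
    by have := in_set0 x; rewrite -SI inE xS xI.
  by case/orP: (notin_interior_end xD xI) => /eqP xa; rewrite -xa xS ?orbT in miss.
exists S'; split => //.
have [c14|nc14] := boolP (connect (restr e (V :\: I :\: S')) a1 a4).
  by case: ntriv; apply: (trivial_instance_of_connect dDS twS' c14).
exact: (tw_le_separated dDS (twQ _ (subsetUl _ _)) nc14).
Qed.

End PathOfBlocks.

Theorem mainTheorem17 (T : finType) (V : {set T}) (e : rel T) (t : nat)
    (X C B1 B2 B3 : {set T}) (a1 a2 a3 a4 : T) :
  symmetric e -> irreflexive e ->
  ~ trivial_instance V e t ->
  modulator V e X ->
  component V e X C ->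
  cutv e C a1 -> cutv e C a2 -> cutv e C a3 -> cutv e C a4 ->
  block e C B1 -> block e C B2 -> block e C B3 ->
  uniq [:: a1; a2; a3; a4] -> uniq [:: B1; B2; B3] ->
  a1 \in B1 -> a2 \in B1 -> a2 \in B2 -> a3 \in B2 -> a3 \in B3 -> a4 \in B3 ->
  nbh V e ((B1 :|: B2 :|: B3) :\: [set a1; a4]) = [set a1; a4] ->
  (has_solution V e t <->
   has_solution (contract_V V B1 a1) (contract_e V e B1 a1) t).
Proof.
move=> esym eirr ntriv [_ twX] [_ CVX _ _] _ _ _ _ k1 k2 k3 ua uB.
move=> a1B1 a2B1 a2B2 a3B2 a3B3 a4B3 nbhI.
move: ua => /= /and4P[]; rewrite !inE !negb_or => /and3P[n12 _ n14] /andP[n23 _] n34 _.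
move: uB => /= /and3P[]; rewrite !inE negb_or => /andP[m12 _] m23 _.
have CV : C \subset V := subset_trans CVX (subsetDl _ _).
have [s1 [_ [cB1 _]] _] := k1; have [s2 _ _] := k2; have [s3 _ _] := k3.
have twD : tw_le 2 (B1 :|: B2 :|: B3) e.
  by apply: tw_le_sub twX _ (fun _ _ _ _ h => h); rewrite !subUset !(subset_trans _ CVX).
split; first exact: has_solution_contract esym (subset_trans s1 CV) a1B1 t cB1.
exact: (has_solution_uncontract esym eirr k1 k2 k3 a1B1 a2B1 a2B2 a3B2 a3B3 a4B3
          n12 n14 n23 n34 m12 m23 CV nbhI twD ntriv).
Qed.
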